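(* Let $I$ be a resident-minimal instance in which every hospital has quota $1$ (the stable marriage case). Then each $(r,h)\in\mathrm{tent}(I)$ is finalizable in $I$ only if it belongs to the maximal safe set with respect to $I$ (the unique inclusion-maximal subset of $\mathrm{tent}(I)$ that is safe with respect to $I$).
   Context: An instance $I$ consists of finite disjoint sets $R$ (residents) and $H$ (hospitals), a positive integer quota $q_h$ for each $h\in H$, for each $r\in R$ a preference list of $r$ (a sequence of distinct members of $H$, not necessarily all), and for each $h\in H$ a preference list of $h$ (a sequence of distinct members of $R$). A list is complete if it contains every member of the opposite side; an instance is complete if all lists are complete. A match is a pair $(r,h)\in R\times H$. For a set $M$ of matches, $\mathrm{res}_h M=\{r:(r,h)\in M\}$, $\mathrm{res}\,M=\{r:(r,h)\in M\text{ for some }h\}$. $J$ is an extension of $I$ (same $R,H$, quotas) if every list of $J$ has the corresponding list of $I$ as a prefix; a complete extension is a completion. An event is $(r,h)^+$ (proposal) or $(r,h)^-$ (rejection). For an event sequence $\sigma$, $\mathrm{prop}(\sigma)$, $\mathrm{rej}(\sigma)$ are the sets of matches proposed/rejected in $\sigma$, $\mathrm{tent}(\sigma)=\mathrm{prop}(\sigma)\setminus\mathrm{rej}(\sigma)$, and $\mathrm{pend}_I(\sigma)$ is the set of $(r,h)\in\mathrm{tent}(\sigma)$ with $r$ not on the list of $h$ in $I$. A match $(r,h)\in M$ is ousted from $M$ in $I$ if the list of $h$ in $I$ contains at least $q_h$ residents of $\mathrm{res}_h M$ and either $r$ is not on it or $r$ is preceded on it by at least $q_h$ residents of $\mathrm{res}_h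 M$. $I$-feasible sequences: the empty sequence is $I$-feasible; if $\sigma$ is $I$-feasible then $\sigma+(r,h)^+$ is $I$-feasible if $r\notin\mathrm{res}\,\mathrm{tent}(\sigma)$, $(r,h)\notin\mathrm{prop}(\sigma)$, $h$ is on the list of $r$ in $I$ and $(r,h')\in\mathrm{rej}(\sigma)$ for every $h'$ preceding $h$ on it; and $\sigma+(r,h)^-$ is $I$-feasible if $(r,h)$ is ousted from $\mathrm{prop}(\sigma)$ in $I$ and $(r,h)\notin\mathrm{rej}(\sigma)$. All maximal $I$-feasible sequences contain the same events; $\mathrm{prop}(I),\mathrm{tent}(I),\mathrm{pend}(I)$ denote $\mathrm{prop}(\sigma),\mathrm{tent}(\sigma),\mathrm{pend}_I(\sigma)$ for any maximal $I$-feasible $\sigma$. A match $(r,h)\in\mathrm{tent}(I)$ is finalizable in $I$ if $(r,h)\in\mathrm{tent}(J)$ for every completion $J$ of $I$. $I$ is resident-minimal if $\mathrm{prop}(I)$ equals the set of matches $(r,h)$ with $h$ on the list of $r$ in $I$. Let $M\subseteq\mathrm{tent}(I)$. A resident $r'$ is relevant to $h$ with respect to $M$ if $(r',h)\in M$ or $r'\notin\mathrm{res}\,M$. A match $(r,h)\in M$ is endangered in $M$ with respect to $I$ if: when $(r,h)\in\mathrm{tent}(I)\setminus\mathrm{pend}(I)$, the list of $h$ in $I$ contains at least $q_h$ residents preceding $r$ that are relevant to $h$ with respect to $M$; when $(r,h)\in\mathrm{pend}(I)$, the number of residents relevant to $h$ with respect to $M$ is at least $q_h+1$. $M$ is safe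 with respect to $I$ if no match of $M$ is endangered in $M$ with respect to $I$. (There is a unique inclusion-maximal safe subset of $\mathrm{tent}(I)$.) *)

From mathcomp Require Import all_boot.
Set Implicit Arguments.
Unset Strict Implicit.
Unset Printing Implicit Defensive.

Section HR.
Variables (R H : finType).

Record instance := Instance {
  quota : H -> nat;
  rlist : R -> seq H;
  hlist : H -> seq R
}.

Definition valid_instance (I : instance) : Prop :=
  (forall h, 0 < quota I h) /\ (forall r, uniq (rlist I r)) /\ (forall h, uniq (hlist I h)).

Definition complete_instance (I : instance) : Prop :=
  (forall r h, h \in rlist I r) /\ (forall h r, r \in hlist I h).

Definition extension (I J : instance) : Prop :=
  (forall h, quota J h = quota I h) /\
  (forall r, prefix (rlist I r) (rlist J r)) /\
  (forall h, prefix (hlist I h) (hlist J h)).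

Definition completion (I J : instance) : Prop :=
  valid_instance J /\ extension I J /\ complete_instance J.

Definition match_t := (R * H)%type.

Definition res_h (M : {set match_t}) (h : H) : {set R} := [set r | (r, h) \in M].
Definition res (M : {set match_t}) : {set R} := [set r | [exists h, (r, h) \in M]].

(* events: (true, m) = proposal m^+, (false, m) = rejection m^- *)
Definition event := (bool * match_t)%type.

Definition prop_of (s : seq event) : {set match_t} := [set m | (true, m) \in s].
Definition rej_of (s : seq event) : {set match_t} := [set m | (false, m) \in s].
Definition tent_of (s : seq event) : {set match_t} := prop_of s :\: rej_of s.
Definition pend_of (I : instance) (s : seq event) : {set match_t} :=
  [set m in tent_of s | m.1 \notin hlist I m.2].

Definition count_in (M : {set match_t}) (h : H) (l : seq R) : nat :=
  count (fun r' => r' \in res_h M h) l.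

Definition ousted (I : instance) (M : {set match_t}) (r : R) (h : H) : bool :=
  [&& (r, h) \in M,
      quota I h <= count_in M h (hlist I h) &
      (r \notin hlist I h) ||
      (quota I h <= count_in M h (take (index r (hlist I h)) (hlist I h)))].

Inductive feasible (I : instance) : seq event -> Prop :=
| feas_nil : feasible I [::]
| feas_prop (s : seq event) (r : R) (h : H) :
    feasible I s ->
    r \notin res (tent_of s) ->
    (r, h) \notin prop_of s ->
    h \in rlist I r ->
    (forall h', h' \in take (index h (rlist I r)) (rlist I r) -> (r, h') \in rej_of s) ->
    feasible I (rcons s (true, (r, h)))
| feas_rej (s : seq event) (r : R) (h : H) :
    feasible I s ->
    ousted I (prop_of s) r h ->
    (r, h) \notin rej_of s ->
    feasible I (rcons s (false, (r, h))).

Definition maximal_feasible (I : instance) (s : seq event) : Prop :=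
  feasible I s /\ forall e, ~ feasible I (rcons s e).

(* prop(I), tent(I), pend(I): computed from a maximal I-feasible sequence
   (all maximal I-feasible sequences contain the same events). *)
Definition propI (I : instance) (m : match_t) : Prop :=
  exists s, maximal_feasible I s /\ m \in prop_of s.
Definition tentI (I : instance) (m : match_t) : Prop :=
  exists s, maximal_feasible I s /\ m \in tent_of s.
Definition pendI (I : instance) (m : match_t) : Prop :=
  exists s, maximal_feasible I s /\ m \in pend_of I s.

Definition finalizable (I : instance) (m : match_t) : Prop :=
  tentI I m /\ forall J, completion I J -> tentI J m.

Definition resident_minimal (I : instance) : Prop :=
  forall r h, propI I (r, h) <-> h \in rlist I r.

Definition relevant (M : {set match_t}) (h : H) (r' : R) : bool :=
  ((r', h) \in M) || (r' \notin res M).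

Definition endangered (I : instance) (M : {set match_t}) (r : R) (h : H) : Prop :=
  (r, h) \in M /\
  ((tentI I (r, h) /\ ~ pendI I (r, h) /\
     quota I h <= count (relevant M h) (take (index r (hlist I h)) (hlist I h)))
   \/
   (pendI I (r, h) /\ quota I h + 1 <= #|[set r' | relevant M h r']|)).

Definition subset_tent (I : instance) (M : {set match_t}) : Prop :=
  forall m, m \in M -> tentI I m.

Definition safe (I : instance) (M : {set match_t}) : Prop :=
  subset_tent I M /\ forall r h, ~ endangered I M r h.

Definition maximal_safe (I : instance) (M : {set match_t}) : Prop :=
  safe I M /\ forall M' : {set match_t}, M \subset M' -> safe I M' -> M' = M.

End HR.

From mathcomp Require Import all_boot.
From mathcomp Require Import boolp.
Set Implicit Arguments.
Unset Strict Implicit.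
Unset Printing Implicit Defensive.

(* Endangerment only becomes easier when fewer matches are kept, so safe sets
   are closed under union and the maximal safe set contains every safe set; it
   suffices that the set F of finalizable matches is safe.  Let (x, y) be
   finalizable.  A resident r other than x that y ranks above x (any r, if x is
   unranked by y) cannot be relevant to y with respect to F.  If r already
   proposes to y in I, then x is ousted, in I itself or, when y ranks neither,
   in the completion where y ranks r just after its list.  Otherwise r has no
   finalizable match (a finalizable (r, y) would be proposed), so some
   completion lets r be rejected by its whole list; extending r's list by y and
   y's list by r then gives a completion in which r proposes to y and ousts x.
   Both contradict the finalizability of (x, y). *)

Section Sequences.
Variable T : eqType.
Implicit Types (p l : seq T) (x z : T).

Lemma mem_rcons_head (s : seq T) x : x \in rcons s x.
Proof. by rewrite mem_rcons mem_head. Qed.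

Lemma take_index_prefix p l x : prefix p l -> x \in p ->
  take (index x l) l = take (index x p) p.
Proof. by case/prefixP=> t -> xp; rewrite index_cat xp take_cat index_mem xp. Qed.

Lemma index_neq l x z : x \in l -> x != z -> index x l != index z l.
Proof.
move=> xl; apply: contraNneq => e.
by rewrite -(nth_index x xl) e nth_index // -index_mem -e index_mem.
Qed.

Lemma index_filter_ltn (P : pred T) s x z : P x -> P z -> z \in s ->
  index x s < index z s -> index x (filter P s) < index z (filter P s).
Proof.
move=> Px Pz; elim: s => [|c s IH] //= zs.
case: (eqVneq c x) => [->|cx]; first by rewrite Px /= eqxx; case: eqP.
case: (eqVneq c z) => [//|cz].
move: zs; rewrite in_cons eq_sym (negbTE cz) /= => zs.
by case: (P c); rewrite /= ?(negbTE cx) ?(negbTE cz) ?ltnS; apply: IH.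
Qed.

Lemma leq_count_uniq_subset (P : pred T) s1 s2 : uniq s1 -> {subset s1 <= s2} ->
  count P s1 <= count P s2.
Proof.
move=> u12 s12; rewrite -!size_filter; apply: uniq_leq_size; first exact: filter_uniq.
by move=> z; rewrite !mem_filter => /andP[-> /s12].
Qed.

Definition promote p x l : seq T :=
  if x \in p then l else p ++ x :: [seq z <- l | (z \notin p) && (z != x)].

Variables (p l : seq T) (x : T).
Hypothesis pl : prefix p l.

Lemma prefix_promote : prefix p (promote p x l).
Proof. by rewrite /promote; case: ifP => _; rewrite ?prefix_prefix. Qed.

Lemma mem_promote z : (z \in promote p x l) = (z == x) || (z \in l).
Proof.
case/prefixP: pl => t lE; rewrite /promote lE; case: ifP => xp.
  by case: eqVneq => // ->; rewrite mem_cat xp.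
rewrite !mem_cat in_cons mem_filter mem_cat.
by case: (z \in p); case: eqVneq.
Qed.

Lemma promote_uniq : uniq l -> uniq (promote p x l).
Proof.
move=> ul; rewrite /promote; case: ifP => // xp.
rewrite cat_uniq (prefix_uniq pl ul) /= filter_uniq // mem_filter eqxx andbF xp /=.
by rewrite andbT; apply/hasPn => z; rewrite mem_filter => /andP[/andP[]].
Qed.

Lemma take_index_promote : x \notin p ->
  take (index x (promote p x l)) (promote p x l) = p.
Proof.
move=> xp; rewrite /promote (negbTE xp) index_cat (negbTE xp) /= eqxx addn0.
exact: take_size_cat.
Qed.

Lemma index_promote_ltn z : z != x -> (z \in p -> index x p < index z p) ->
  index x (promote p x l) < index z (promote p x l).
Proof.
move=> zx xz; have [t lE] := prefixP pl; rewrite /promote; case: ifP => xp.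
  rewrite lE !index_cat xp; case: ifP => [/xz //|zp].
  by rewrite (leq_trans _ (leq_addr _ _)) ?index_mem.
have zp : z \notin p.
  by apply: contraFN xp => zp; rewrite -index_mem (ltn_trans (xz zp)) ?index_mem.
rewrite !index_cat xp (negbTE zp) /= eqxx eq_sym (negbTE zx).
by rewrite addn0 -[X in X < _]addn0 ltn_add2l.
Qed.


Lemma index_promote_mono z a : a != x -> a \in l -> index z l < index a l ->
  index z (promote p x l) < index a (promote p x l).
Proof.
rewrite /promote; case: ifP => // xp ax.
case/prefixP: pl => t lE; rewrite lE; set Q := fun w => _.
have -> : [seq w <- p ++ t | Q w] = [seq w <- t | Q w].
  rewrite filter_cat (_ : [seq w <- p | Q w] = [::]) //.
  by rewrite -(filter_pred0 p); apply: eq_in_filter => w wp; rewrite /Q wp.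
rewrite !index_cat mem_cat /= (eq_sym x a) (negbTE ax).
have ltp w : w \in p -> index w p < size p by rewrite index_mem.
case: (boolP (z \in p)) => zp; case: (boolP (a \in p)) => ap //= a_in ltza.
- by rewrite (leq_trans (ltp _ zp)) ?leq_addr.
- by have := leq_ltn_trans (leq_addr _ _) (ltn_trans ltza (ltp _ ap)); rewrite ltnn.
- rewrite ltn_add2l; case: eqVneq => // xz; rewrite ltnS.
  apply: index_filter_ltn => //.
  + by rewrite /Q zp eq_sym xz.
  + by rewrite /Q ap ax.
  + by rewrite ltn_add2l in ltza.
Qed.

End Sequences.

Section Feasible.
Variables (R H : finType).
Implicit Types (J : instance R H) (s t : seq (event R H)) (M : {set match_t R H}).

Lemma prop_rcons s e m : (m \in prop_of (rcons s e)) = (e == (true, m)) || (m \in prop_of s).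
Proof. by rewrite !inE mem_rcons in_cons eq_sym. Qed.

Lemma rej_rcons s e m : (m \in rej_of (rcons s e)) = (e == (false, m)) || (m \in rej_of s).
Proof. by rewrite !inE mem_rcons in_cons eq_sym. Qed.

Lemma feasible_rcons J s e : feasible J (rcons s e) -> feasible J s.
Proof.
move eq_se: (rcons s e) => se F; case: F eq_se => [|s' r h F'|s' r h F'].
- by case: s.
- by move=> _ _ _ _ /rcons_inj[->].
- by move=> _ _ /rcons_inj[->].
Qed.

Lemma feasible_take J s n : feasible J s -> feasible J (take n s).
Proof.
rewrite -{1}(cat_take_drop n s); elim/last_ind: (drop n s) => [|d e IH].
  by rewrite cats0.
by rewrite -rcons_cat => /feasible_rcons.
Qed.

Lemma feasible_uniq J s : feasible J s -> uniq s.
Proof.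
elim=> //= s' r h _ IH.
- by move=> _ np _ _; rewrite rcons_uniq inE in np *; rewrite np.
- by move=> _ nr; rewrite rcons_uniq inE in nr *; rewrite nr.
Qed.

Lemma feasible_upto J s e : feasible J s -> e \in s ->
  exists2 s', feasible J (rcons s' e) & e \notin s'.
Proof.
move=> Fs es; exists (take (index e s) s); last by rewrite in_take // ltnn.
rewrite -[X in rcons _ X](nth_index e es) -take_nth ?index_mem //.
exact: feasible_take.
Qed.

Variables (J : instance R H) (s : seq (event R H)).
Hypothesis Fs : feasible J s.

Lemma rej_sub_prop m : m \in rej_of s -> m \in prop_of s.
Proof.
elim: Fs m => // s' r h _ IH.
- by move=> _ _ _ _ m; rewrite rej_rcons prop_rcons /= => /IH ->; rewrite orbT.
- move=> O _ m; rewrite rej_rcons prop_rcons /= => /orP[/eqP[<-]|/IH//].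
  by case/and3P: O.
Qed.

Lemma prop_mem_rlist a b : (a, b) \in prop_of s -> b \in rlist J a.
Proof.
elim: Fs a b => [|s' r h _ IH _ _ hin _|s' r h _ IH _ _] a b.
- by rewrite inE.
- by rewrite prop_rcons => /orP[/eqP[<- <-]|/IH].
- by rewrite prop_rcons => /IH.
Qed.

Lemma prop_rej_before a b b' : (a, b) \in prop_of s ->
  b' \in take (index b (rlist J a)) (rlist J a) -> (a, b') \in rej_of s.
Proof.
elim: Fs a b b' => [|s' r h _ IH _ _ _ before|s' r h _ IH _ _] a b b'.
- by rewrite inE.
- rewrite prop_rcons rej_rcons => /orP[/eqP[<- <-] /before ->|/IH earlier /earlier ->];
    by rewrite orbT.
- by rewrite prop_rcons rej_rcons => /IH earlier /earlier ->; rewrite orbT.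
Qed.

Lemma tent_functional a b1 b2 :
  (a, b1) \in tent_of s -> (a, b2) \in tent_of s -> b1 = b2.
Proof.
rewrite !in_setD => /andP[nr1 p1] /andP[nr2 p2]; apply/eqP/negPn/negP => ne.
have := index_neq (prop_mem_rlist p1) ne; rewrite neq_ltn => /orP[] lt.
- by move: nr1; rewrite (prop_rej_before p2) // in_take ?(prop_mem_rlist p1).
- by move: nr2; rewrite (prop_rej_before p1) // in_take ?(prop_mem_rlist p2).
Qed.

End Feasible.

Section Maximal.
Variables (R H : finType) (J : instance R H).
Implicit Types (s t : seq (event R H)) (M : {set match_t R H}).

Lemma count_in_mono M M' h l : M \subset M' -> count_in M h l <= count_in M' h l.
Proof. by move=> sMM'; apply: sub_count => z; rewrite !inE => /(subsetP sMM'). Qed.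

Lemma ousted_mono M M' a b : M \subset M' -> ousted J M a b -> ousted J M' a b.
Proof.
move=> sMM' /and3P[m q o]; apply/and3P; split.
- exact: subsetP m.
- exact: leq_trans q (count_in_mono _ _ sMM').
- by case/orP: o => [->//|o]; rewrite (leq_trans o) ?count_in_mono ?orbT.
Qed.

Lemma count_in_gt0 M h l z : z \in l -> (z, h) \in M -> 0 < count_in M h l.
Proof. by move=> zl zM; rewrite /count_in -has_count; apply/hasP; exists z; rewrite ?inE. Qed.

Lemma ousted_quota1 M a b r : quota J b = 1 -> (a, b) \in M -> (r, b) \in M ->
  r \in hlist J b -> (a \notin hlist J b) || (index r (hlist J b) < index a (hlist J b)) ->
  ousted J M a b.
Proof.
move=> q1 aM rM rl before; apply/and3P; split; rewrite ?q1 ?(count_in_gt0 rl) //.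
by case/orP: before => [->//|lt]; rewrite (count_in_gt0 (z := r)) ?orbT // in_take.
Qed.

Lemma feasible_rcons_proposal t r h : feasible J t ->
  (r, h) \notin prop_of t -> h \in rlist J r ->
  (forall h', h' \in take (index h (rlist J r)) (rlist J r) -> (r, h') \in rej_of t) ->
  feasible J (rcons t (true, (r, h))).
Proof.
move=> Ft np hr before; apply: feas_prop => //.
apply/negP; rewrite inE => /existsP[b]; rewrite in_setD => /andP[nrb pb].
have br := prop_mem_rlist Ft pb.
have bh : b != h by apply: contraNneq np => <-.
have := index_neq br bh; rewrite neq_ltn => /orP[] lt.
- by move: nrb; rewrite before // in_take.
- by case/negP: np; apply: (rej_sub_prop Ft); apply: (prop_rej_before Ft pb); rewrite in_take.
Qed.

Lemma feasible_sub_maximal s t : feasible J s -> maximal_feasible J t ->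
  prop_of s \subset prop_of t /\ rej_of s \subset rej_of t.
Proof.
move=> Fs [Ft maxt].
elim: Fs => [|s' r h _ [IHp IHr] _ _ hr before|s' r h _ [IHp IHr] O _].
- by split; apply/subsetP => m; rewrite inE.
- have prt : (r, h) \in prop_of t.
    apply: contraT => nprt; case: (maxt (true, (r, h))).
    by apply: feasible_rcons_proposal => // h' /before /(subsetP IHr).
  split; apply/subsetP => m.
  + by rewrite prop_rcons => /orP[/eqP[<-]|/(subsetP IHp)].
  + by rewrite rej_rcons => /orP[//|/(subsetP IHr)].
- have rrt : (r, h) \in rej_of t.
    apply: contraT => nrrt; case: (maxt (false, (r, h))).
    exact: feas_rej (ousted_mono IHp O) nrrt.
  split; apply/subsetP => m.
  + by rewrite prop_rcons => /orP[//|/(subsetP IHp)].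
  + by rewrite rej_rcons => /orP[/eqP[<-]|/(subsetP IHr)].
Qed.

Lemma maximal_feasible_eq t1 t2 : maximal_feasible J t1 -> maximal_feasible J t2 ->
  prop_of t1 = prop_of t2 /\ rej_of t1 = rej_of t2.
Proof.
move=> M1 M2; have [p12 r12] := feasible_sub_maximal M1.1 M2.
have [p21 r21] := feasible_sub_maximal M2.1 M1.
by split; apply/eqP; rewrite eqEsubset ?p12 ?p21 ?r12 ?r21.
Qed.

Lemma exists_maximal_feasible : exists t, maximal_feasible J t.
Proof.
pose P n := `[< exists2 s, feasible J s & size s = n >].
have P0 : exists n, P n by exists 0; apply/asboolP; exists [::]; first exact: feas_nil.
have Pub n : P n -> n <= #|{: event R H}|.
  by case/asboolP=> s /feasible_uniq/card_uniqP <- <-; apply: max_card.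
case: (ex_maxnP P0 Pub) => n /asboolP[t Ft <-] tmax.
exists t; split=> // e Fte.
by have := tmax _ (asboolT (ex_intro2 _ _ _ Fte erefl)); rewrite size_rcons ltnn.
Qed.

Section OfMaximal.
Variable t : seq (event R H).
Hypothesis maxt : maximal_feasible J t.

Lemma propI_maximal m : propI J m <-> m \in prop_of t.
Proof.
split=> [[t' [maxt' mt']]|mt]; last by exists t.
by rewrite (maximal_feasible_eq maxt maxt').1.
Qed.

Lemma tentI_maximal m : tentI J m <-> m \in tent_of t.
Proof.
split=> [[t' [maxt' mt']]|mt]; last by exists t.
by move: mt'; rewrite /tent_of; have [-> ->] := maximal_feasible_eq maxt maxt'.
Qed.

Lemma pendI_maximal m : pendI J m <-> m \in pend_of J t.
Proof.
split=> [[t' [maxt' mt']]|mt]; last by exists t.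
by move: mt'; rewrite /pend_of /tent_of; have [-> ->] := maximal_feasible_eq maxt maxt'.
Qed.

Lemma tent_not_ousted a b : (a, b) \in tent_of t -> ~~ ousted J (prop_of t) a b.
Proof.
rewrite in_setD => /andP[nr _]; apply/negP => O.
by case: maxt => Ft /(_ (false, (a, b))); apply; apply: feas_rej.
Qed.

End OfMaximal.

Lemma tentI_functional a b1 b2 : tentI J (a, b1) -> tentI J (a, b2) -> b1 = b2.
Proof.
have [t maxt] := exists_maximal_feasible.
by rewrite !(tentI_maximal maxt); apply: (tent_functional maxt.1).
Qed.

End Maximal.

Section Completions.
Variables (R H : finType).
Implicit Types (I J : instance R H) (s : seq (event R H)) (M : {set match_t R H}).

Lemma feasible_transfer J1 J2 s : feasible J1 s ->
  (forall a b, (true, (a, b)) \in s -> b \in rlist J1 a ->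
     b \in rlist J2 a /\
     take (index b (rlist J2 a)) (rlist J2 a) = take (index b (rlist J1 a)) (rlist J1 a)) ->
  (forall a b M, (false, (a, b)) \in s -> ousted J1 M a b -> ousted J2 M a b) ->
  feasible J2 s.
Proof.
elim=> [|s' r h _ IH nres np hr before|s' r h _ IH O nr] same_prop same_rej;
  first exact: feas_nil.
all: have {}IH : feasible J2 s'
  by apply: IH => [a b|a b M] e_in; [apply: same_prop|apply: same_rej];
     rewrite mem_rcons in_cons e_in orbT.
- have [hr2 same_before] := same_prop r h (mem_rcons_head _ _) hr.
  by apply: feas_prop => //; rewrite same_before.
- by apply: feas_rej => //; apply: same_rej (mem_rcons_head _ _) O.
Qed.

Lemma ousted_extension I J M a b : extension I J -> ousted I M a b -> ousted J M a b.
Proof.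
case=> [q [_ ph]] /and3P[m c o]; have [t E] := prefixP (ph b).
have count_cat_ge u : quota I b <= count_in M b (hlist I b ++ u).
  by rewrite /count_in count_cat (leq_trans c) ?leq_addr.
apply/and3P; split; rewrite ?q ?E //.
case: (boolP (a \in hlist I b)) => aI.
- rewrite index_cat aI take_cat index_mem aI.
  by move: o; rewrite aI /= => ->; rewrite orbT.
- rewrite mem_cat (negbTE aI) index_cat (negbTE aI) take_cat ltnNge leq_addr /=.
  by rewrite count_cat_ge orbT.
Qed.

Lemma feasible_extension I J s : extension I J -> feasible I s -> feasible J s.
Proof.
move=> ext Fs; apply: (feasible_transfer Fs) => [a b _ br|a b M _].
  have pre := ext.2.1 a; split; first by case/prefixP: pre => t ->; rewrite mem_cat br.
  exact: take_index_prefix.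
exact: ousted_extension.
Qed.

Definition standard_completion I : instance R H :=
  Instance (quota I) (fun r => rlist I r ++ [seq h <- enum H | h \notin rlist I r])
    (fun h => hlist I h ++ [seq r <- enum R | r \notin hlist I h]).

Lemma standard_completionP I : valid_instance I -> completion I (standard_completion I).
Proof.
have uniq_fill (T : finType) (l : seq T) : uniq l -> uniq (l ++ [seq z <- enum T | z \notin l]).
  move=> ul; rewrite cat_uniq ul filter_uniq ?enum_uniq // andbT.
  by apply/hasPn => z; rewrite mem_filter => /andP[].
have mem_fill (T : finType) (l : seq T) z : z \in l ++ [seq z <- enum T | z \notin l].
  by rewrite mem_cat mem_filter mem_enum andbT orbN.
case=> q [ur uh]; split; [|split].
- by split=> //; split=> x; apply: uniq_fill.
- by split; [|split] => x; rewrite /= ?prefix_prefix.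
- by split=> x z; apply: mem_fill.
Qed.

(* The two modifications of a completion [J] of [I] used to build rivals:
   resident [r] lists [h], resp. hospital [h] ranks [r], right after its
   [I]-list. *)
Definition redirect I J r h : instance R H :=
  Instance (quota J)
    (fun a => if a == r then promote (rlist I r) h (rlist J r) else rlist J a) (hlist J).

Definition raise_at I J r h : instance R H :=
  Instance (quota J) (rlist J)
    (fun b => if b == h then promote (hlist I h) r (hlist J h) else hlist J b).

Lemma redirect_completion I J r h : completion I J -> completion I (redirect I J r h).
Proof.
case=> [[q [ur uh]] [[eq [pr ph]] [cr ch]]]; split; [|split].
- split=> //; split=> [a|b] /=; last exact: uh.
  by case: eqP => _; [exact: promote_uniq (pr r) (ur r)|exact: ur].
- split=> //; split=> [a|b] /=; last exact: ph.
  by case: eqP => [->|_]; [exact: prefix_promote (pr r)|exact: pr].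
- split=> [a b|b a] /=; last exact: ch.
  by case: eqP => _; rewrite ?(mem_promote _ (pr r)) ?cr ?orbT.
Qed.

Lemma raise_at_completion I J r h : completion I J -> completion I (raise_at I J r h).
Proof.
case=> [[q [ur uh]] [[eq [pr ph]] [cr ch]]]; split; [|split].
- split=> //; split=> [a|b] /=; first exact: ur.
  by case: eqP => _; [exact: promote_uniq (ph h) (uh h)|exact: uh].
- split=> //; split=> [a|b] /=; first exact: pr.
  by case: eqP => [->|_]; [exact: prefix_promote (ph h)|exact: ph].
- split=> [a b|b a] /=; first exact: cr.
  by case: eqP => _; rewrite ?(mem_promote _ (ph h)) ?ch ?orbT.
Qed.

Lemma ousted_raise_at I J r h M a : completion I J -> a != r ->
  ousted J M a h -> ousted (raise_at I J r h) M a h.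
Proof.
move=> C ar; have [[_ [_ uh2]] [_ [_ ch2]]] := raise_at_completion r h C.
case: C => [[_ [_ uh]] [[_ [_ ph]] [_ ch]]] /and3P[m c o].
move: (uh2 h) (ch2 h); rewrite /ousted /= eqxx m /=.
set l := hlist J h; set l2 := promote _ _ _ => ul2 ch2h.
have perm_l : perm_eq l l2 by apply: uniq_perm => [|//|z]; rewrite ?uh ?ch ?ch2h.
rewrite /count_in -(permP perm_l) c ch2h /=; rewrite ch /= in o; apply: leq_trans o _.
apply: leq_count_uniq_subset; first exact: take_uniq.
by move=> z; rewrite !in_take ?ch ?ch2h //; apply: index_promote_mono (ph h) _ _ ar _.
Qed.

Lemma feasible_redirect I J r h s : completion I J -> feasible J s ->
  (forall b, (r, b) \in prop_of s -> b \in rlist I r) -> feasible (redirect I J r h) s.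
Proof.
move=> C Fs r_in_I; apply: (feasible_transfer Fs) => // a b ab bJ /=.
case: (eqVneq a r) ab => [->|_] ab; last by split.
have bI : b \in rlist I r by apply: r_in_I; rewrite inE.
have pre := C.2.1.2.1 r; rewrite mem_promote // C.2.2.1 orbT; split=> //.
by rewrite (take_index_prefix (prefix_promote h pre)) // (take_index_prefix pre).
Qed.

Lemma feasible_raise_at I J r h s : completion I J -> feasible J s ->
  (r, h) \notin rej_of s -> feasible (raise_at I J r h) s.
Proof.
move=> C Fs nrej; apply: (feasible_transfer Fs) => // a b M ab.
case: (eqVneq b h) ab => [->|bh] ab; last by rewrite /ousted /= (negbTE bh).
apply: ousted_raise_at => //; apply: contraNneq nrej => <-.
by rewrite inE.
Qed.

End Completions.

Section Safety.
Variables (R H : finType) (J : instance R H).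
Implicit Types (A B M : {set match_t R H}).

Lemma relevant_antimono A B h r : A \subset B -> subset_tent J B ->
  relevant B h r -> relevant A h r.
Proof.
move=> sAB tB; rewrite /relevant; case/orP => [rB|nrB].
- case: (boolP (r \in res A)) => [|_]; last by rewrite orbT.
  rewrite inE => /existsP[h' rA].
  by rewrite -(tentI_functional (tB _ (subsetP sAB _ rA)) (tB _ rB)) rA.
- apply/orP; right; apply: contra nrB; rewrite !inE => /existsP[h' rA].
  by apply/existsP; exists h'; apply: (subsetP sAB).
Qed.

Lemma endangered_antimono A B a b : A \subset B -> subset_tent J B -> (a, b) \in A ->
  endangered J B a b -> endangered J A a b.
Proof.
move=> sAB tB aA [_ [[t [np c]]|[p c]]]; split=> //.
- left; do 2!split=> //; apply: leq_trans c _; apply: sub_count => z.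
  exact: relevant_antimono.
- right; split=> //; apply: leq_trans c _; apply: subset_leq_card.
  by apply/subsetP => z; rewrite !inE; apply: relevant_antimono.
Qed.

Lemma safe_setU A B : safe J A -> safe J B -> safe J (A :|: B).
Proof.
move=> [tA nA] [tB nB].
have tAB : subset_tent J (A :|: B) by move=> m; rewrite in_setU => /orP[/tA|/tB].
split=> // a b E; have := E.1; rewrite in_setU => /orP[aA|aB].
- exact: nA (endangered_antimono (subsetUl A B) tAB aA E).
- exact: nB (endangered_antimono (subsetUr A B) tAB aB E).
Qed.

Lemma maximal_safe_max M A : maximal_safe J M -> safe J A -> A \subset M.
Proof.
by move=> [sM maxM] sA; rewrite -(maxM _ (subsetUl M A) (safe_setU sM sA)) subsetUr.
Qed.

End Safety.

Section StableMarriage.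
Variables (R H : finType) (I : instance R H).
Hypotheses (vI : valid_instance I) (q1 : forall h, quota I h = 1).
Hypothesis rmI : resident_minimal I.
Variable s0 : seq (event R H).
Hypothesis maxs0 : maximal_feasible I s0.

Lemma prop_s0 r h : ((r, h) \in prop_of s0) = (h \in rlist I r).
Proof. by apply/idP/idP => [/(propI_maximal maxs0)/rmI|/rmI/(propI_maximal maxs0)]. Qed.

Lemma finalizable_outranks J s x y r : completion I J -> finalizable I (x, y) ->
  feasible J s -> (r, y) \in prop_of s -> index x (hlist J y) <= index r (hlist J y).
Proof.
move=> C [_ fin] Fs rys; rewrite leqNgt; apply/negP => rx.
have [_ [[qJ _] [_ chJ]]] := C.
have [t maxt] := exists_maximal_feasible J.
have xyt : (x, y) \in tent_of t by apply/(tentI_maximal maxt)/fin.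
case/negP: (tent_not_ousted maxt xyt); apply: (ousted_quota1 (r := r)).
- by rewrite qJ q1.
- by move: xyt; rewrite in_setD => /andP[].
- exact: subsetP (feasible_sub_maximal Fs maxt).1 _ rys.
- exact: chJ.
- by rewrite rx orbT.
Qed.

Lemma finalizable_no_raised_rival J s x y r : finalizable I (x, y) -> x != r ->
  (x \in hlist I y -> index r (hlist I y) < index x (hlist I y)) ->
  completion I J -> feasible (raise_at I J r y) s -> (r, y) \in prop_of s -> False.
Proof.
move=> fin xr rx C Fs rys.
have := finalizable_outranks (raise_at_completion r y C) fin Fs rys.
by rewrite /= eqxx leqNgt index_promote_ltn ?C.2.1.2.2.
Qed.

Definition exhausts J r s : Prop :=
  [/\ feasible J s, forall b, b \in rlist I r -> (r, b) \in rej_of s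
    & forall b, (r, b) \in prop_of s -> b \in rlist I r].

Lemma exhausts_of_unmatched r : r \notin res (tent_of s0) ->
  exhausts (standard_completion I) r s0.
Proof.
move=> nres; split.
- exact: feasible_extension (standard_completionP vI).2.1 maxs0.1.
- move=> b bI; apply: contraR nres => nrej; rewrite inE; apply/existsP; exists b.
  by rewrite in_setD nrej prop_s0.
- by move=> b; rewrite prop_s0.
Qed.

Lemma exhausts_of_not_tentI J r h : completion I J -> (r, h) \in tent_of s0 ->
  ~ tentI J (r, h) -> exists s, exhausts J r s.
Proof.
move=> C rhs0 nt; have [t maxt] := exists_maximal_feasible J.
have rh_prop : (r, h) \in prop_of s0 by move: rhs0; rewrite in_setD => /andP[].
have hI : h \in rlist I r by rewrite -prop_s0.
have rht : (r, h) \in rej_of t.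
  have [sp _] := feasible_sub_maximal (feasible_extension C.2.1 maxs0.1) maxt.
  apply: contraT => nr; case: nt; apply/(tentI_maximal maxt).
  by rewrite in_setD nr (subsetP sp).
have rh_t : (false, (r, h)) \in t by rewrite inE in rht.
have [s Fs ns] := feasible_upto maxt.1 rh_t.
have rhs : (r, h) \in prop_of s.
  have : (r, h) \in prop_of (rcons s (false, (r, h))).
    by apply: (rej_sub_prop Fs); rewrite rej_rcons eqxx.
  by rewrite prop_rcons.
have Fs' := feasible_rcons Fs.
have [t' rJ] := prefixP (C.2.1.2.1 r).
exists (rcons s (false, (r, h))); split=> // b; last first.
  rewrite prop_rcons /= => rbs; apply: contraT => bI; case/negP: ns.
  suff : (r, h) \in rej_of s by rewrite inE.
  apply: (prop_rej_before Fs' rbs).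
  rewrite rJ in_take ?mem_cat ?hI // !index_cat hI (negbTE bI).
  by rewrite (leq_trans _ (leq_addr _ _)) ?index_mem.
rewrite rej_rcons => bI; case: (eqVneq b h) => [->|bh]; first by rewrite eqxx.
have := index_neq bI bh; rewrite neq_ltn => /orP[] lt.
- apply/orP; right; apply: (prop_rej_before Fs' rhs).
  by rewrite (take_index_prefix (C.2.1.2.1 r) hI) in_take.
- by move: rhs0; rewrite in_setD (prop_rej_before maxs0.1 (b := b)) ?prop_s0 ?in_take.
Qed.

Lemma exhausts_of_unfinalizable r : (forall h, ~ finalizable I (r, h)) ->
  exists J, completion I J /\ exists s, exhausts J r s.
Proof.
move=> nfin; case: (boolP (r \in res (tent_of s0))) => [|nres]; last first.
  exists (standard_completion I); split; first exact: standard_completionP.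
  by exists s0; apply: exhausts_of_unmatched.
rewrite inE => /existsP[h rhs0].
have /existsNP[J /not_implyP[C nt]] : ~ forall J, completion I J -> tentI J (r, h).
  by move=> all_tent; apply: (nfin h); split=> //; apply/(tentI_maximal maxs0).
by exists J; split=> //; apply: exhausts_of_not_tentI C rhs0 nt.
Qed.

Lemma exhausts_propose J r y s : completion I J -> exhausts J r s -> y \notin rlist I r ->
  feasible (raise_at I (redirect I J r y) r y) (rcons s (true, (r, y))).
Proof.
move=> C [Fs rejI propI] yI.
have npy : (r, y) \notin prop_of s by apply: contra yI => /propI.
have nry : (r, y) \notin rej_of s by apply: contra npy; apply: (rej_sub_prop Fs).
have F2 := feasible_raise_at (redirect_completion r y C) (feasible_redirect y C Fs propI) nry.
apply: feasible_rcons_proposal => //=; rewrite eqxx.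
- by rewrite mem_promote ?eqxx // C.2.1.2.1.
- by move=> h'; rewrite take_index_promote ?C.2.1.2.1 // => /rejI.
Qed.

Definition finalizable_set : {set match_t R H} := [set m | `[< finalizable I m >]].

Lemma in_finalizable_set m : reflect (finalizable I m) (m \in finalizable_set).
Proof. by rewrite inE; apply: asboolP. Qed.

Lemma finalizable_no_relevant_rival x y r : finalizable I (x, y) -> x != r ->
  (r, y) \notin prop_of s0 -> relevant finalizable_set y r ->
  (x \in hlist I y -> index r (hlist I y) < index x (hlist I y)) -> False.
Proof.
move=> fin xr nry; case/orP => [/in_finalizable_set[ry _]|nres] rx.
  by move/(tentI_maximal maxs0): ry; rewrite in_setD (negbTE nry) andbF.
have nfin h : ~ finalizable I (r, h).
  move=> rh; case/negP: nres; rewrite inE; apply/existsP; exists h.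
  exact/in_finalizable_set.
have [J [C [s ex]]] := exhausts_of_unfinalizable nfin.
apply: (finalizable_no_raised_rival fin xr rx (redirect_completion r y C)).
- by apply: exhausts_propose C ex _; rewrite -prop_s0.
- by rewrite prop_rcons eqxx.
Qed.

Lemma finalizable_not_endangered x y : finalizable I (x, y) ->
  ~ endangered I finalizable_set x y.
Proof.
move=> fin [_ E].
have xys0 : (x, y) \in tent_of s0 by apply/(tentI_maximal maxs0); case: fin.
have xyp : (x, y) \in prop_of s0 by move: xys0; rewrite in_setD => /andP[].
case: E => [[_ [npI cnt]]|[pI card]].
- have xl : x \in hlist I y.
    apply: contraT => nxl; case: npI; apply/(pendI_maximal maxs0).
    by rewrite inE xys0.
  rewrite q1 -has_count in cnt; case/hasP: cnt => r rin rel.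
  have lt := index_ltn rin; have rl := mem_take rin.
  have xr : x != r by apply: contraTneq lt => ->; rewrite ltnn.
  apply: (finalizable_no_relevant_rival fin xr _ rel (fun _ => lt)).
  apply/negP => ryp; case/negP: (tent_not_ousted maxs0 xys0).
  by apply: ousted_quota1 (q1 y) xyp ryp rl _; rewrite lt orbT.
- have nxl : x \notin hlist I y.
    by move/(pendI_maximal maxs0): pI; rewrite inE => /andP[].
  have /existsP[r /andP[rel rx]] : [exists r, relevant finalizable_set y r && (r != x)].
    apply: contraLR card; rewrite negb_exists => /forallP none.
    rewrite q1 -ltnNge ltnS -(cards1 x); apply/subset_leq_card/subsetP => z.
    by rewrite !inE => rz; apply: contraR (none z) => zx; rewrite rz.
  have xr : x != r by rewrite eq_sym.
  case: (boolP ((r, y) \in prop_of s0)) => ryp; last first.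
    by apply: (finalizable_no_relevant_rival fin xr ryp rel); rewrite (negbTE nxl).
  have C := standard_completionP vI.
  apply: (finalizable_no_raised_rival fin xr _ C _ ryp); first by rewrite (negbTE nxl).
  exact: feasible_extension (raise_at_completion r y C).2.1 maxs0.1.
Qed.

Lemma finalizable_set_safe : safe I finalizable_set.
Proof.
split=> [m /in_finalizable_set[]//|x y E].
by have /in_finalizable_set fin := E.1; apply: finalizable_not_endangered fin E.
Qed.

End StableMarriage.

Theorem theorem7 (R H : finType) (I : instance R H) :
  valid_instance I ->
  (forall h, quota I h = 1) ->
  resident_minimal I ->
  forall (r : R) (h : H),
    tentI I (r, h) ->
    finalizable I (r, h) ->
    forall M : {set match_t R H}, maximal_safe I M -> (r, h) \in M.
Proof.
move=> vI q1 rmI r h _ fin M maxM.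
have [s0 maxs0] := exists_maximal_feasible I.
apply: (subsetP (maximal_safe_max maxM (finalizable_set_safe vI q1 rmI maxs0))).
exact/in_finalizable_set.
Qed.
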